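(* Let $\mathcal{U}_{w,F}$ be a folded ribbon $3$-stick unknot with ribbon linking number $\operatorname{Lk}(\mathcal{U}_{w,F})=\pm1$, and assume $\operatorname{Len}(\mathcal{U})=1$. Then the ribbon width satisfies $w\le \frac{1}{\sqrt3}$, and the width achieves its maximum value $\frac1{\sqrt3}$ when $\mathcal{U}$ is an equilateral triangle.
   Context: A folded ribbon $3$-stick unknot corresponds to an unknot diagram $\mathcal{U}$ with three edges forming a non-degenerate triangle. For width $w>0$, $\mathcal{U}_{w,F}$ is a flat strip of width $w$ centred on $\mathcal{U}$ (boundary parallel to and at distance $w/2$ from each edge), folded at each vertex along a fold line through the vertex perpendicular to the bisector of the angle there; it is a piecewise-linear immersion of a Möbius band into the plane whose only singularities are the pairwise disjoint fold lines (this constrains how large $w$ can be for a given triangle); the folding information $F$ records which layer lies on top at each fold. The ribbon linking number $\operatorname{Lk}(\mathcal{U}_{w,F})$ is one half the sum of the signs (right-hand rule) of the crossings between the oriented diagram and the ribbon's boundary curve. Linking number $\pm1$ corresponds to one of the three folds being of a different over/under type from the other two. *)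

From Stdlib Require Import Reals ZArith.
Open Scope R_scope.

Definition pt := (R * R)%type.
Definition vsub (p q : pt) : pt := (fst p - fst q, snd p - snd q).
Definition cross (u v : pt) : R := fst u * snd v - snd u * fst v.
Definition norm (u : pt) : R := sqrt (fst u ^ 2 + snd u ^ 2).
Definition dist (p q : pt) : R := norm (vsub p q).

Definition nondegenerate (A B C : pt) : Prop := cross (vsub B A) (vsub C A) <> 0.

Definition Len (A B C : pt) : R := dist A B + dist B C + dist C A.

Definition equilateral (A B C : pt) : Prop := dist A B = dist B C /\ dist B C = dist C A.

Definition unit_to (V P : pt) : pt :=
  let u := vsub P V in (fst u / norm u, snd u / norm u).

Definition bisector (V P Q : pt) : pt :=
  (fst (unit_to V P) + fst (unit_to V Q), snd (unit_to V P) + snd (unit_to V Q)).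

Definition fold_dir (V P Q : pt) : pt :=
  let b := bisector V P Q in (- snd b, fst b).

Definition dist_to_line (X V P : pt) : R :=
  Rabs (cross (vsub P V) (vsub X V)) / norm (vsub P V).

(* The fold line (segment) of the ribbon of width w at vertex V, whose
   neighbouring vertices are P and Q: the points of the line through V
   perpendicular to the angle bisector that lie in the ribbon, i.e. within
   distance w/2 of the two edge lines VP and VQ. *)
Definition fold_segment (w : R) (V P Q : pt) (X : pt) : Prop :=
  (exists t : R, X = (fst V + t * fst (fold_dir V P Q), snd V + t * snd (fold_dir V P Q)))
  /\ dist_to_line X V P <= w / 2 /\ dist_to_line X V Q <= w / 2.

(* U_{w,F} is a well-defined folded ribbon: w > 0 and the three fold lines
   are pairwise disjoint. *)
Definition folded_ribbon_ok (A B C : pt) (w : R) : Prop :=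
  0 < w /\
  (forall X, ~ (fold_segment w A C B X /\ fold_segment w B A C X)) /\
  (forall X, ~ (fold_segment w B A C X /\ fold_segment w C B A X)) /\
  (forall X, ~ (fold_segment w C B A X /\ fold_segment w A C B X)).

(* Folding information: the over/under type of the fold at A, B, C. *)
Definition folding := (bool * bool * bool)%type.
Definition fold_sign (b : bool) : Z := if b then 1%Z else (-1)%Z.

(* Ribbon linking number: each fold contributes +-1 according to its type
   (so Lk = +-3 when all folds agree, +-1 when exactly one differs). *)
Definition ribbon_Lk (F : folding) : Z :=
  let '(fA, fB, fC) := F in (fold_sign fA + fold_sign fB + fold_sign fC)%Z.

(* The fold line at a vertex is perpendicular to the angle bisector, i.e. it is
   the external bisector: the points whose signed distances to the two edge
   lines agree.
   The external bisectors at A and B meet only at the excentre opposite C, which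
   lies at the exradius r_C from every side line, so the two fold segments are
   disjoint iff w < 2 r_C.  By Heron's formula r_C^2 = s (s-a) (s-b) / (s-c) for
   the semiperimeter s, and when c is the shortest side this is at most
   s^2 / 3 = Len^2 / 12, with equality for the equilateral triangle.  Hence
   w < Len / sqrt 3, and for the equilateral triangle every such w is admissible. *)

From Stdlib Require Import Reals ZArith Lra Psatz.
Open Scope R_scope.

Lemma dist_sq (P Q : pt) : dist P Q ^ 2 = (fst P - fst Q) ^ 2 + (snd P - snd Q) ^ 2.
Proof.
  unfold dist, norm, vsub; cbn [fst snd].
  rewrite pow2_sqrt; [reflexivity |].
  apply Rplus_le_le_0_compat; apply pow2_ge_0.
Qed.

Lemma dist_ge0 (P Q : pt) : 0 <= dist P Q.
Proof. apply sqrt_pos. Qed.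

Lemma dist_sym (P Q : pt) : dist P Q = dist Q P.
Proof. unfold dist, norm, vsub; cbn [fst snd]. f_equal. ring. Qed.

Lemma cross_antisym (u v : pt) : cross u v = - cross v u.
Proof. unfold cross. ring. Qed.

Lemma sum_sq_eq0 (x y : R) : x ^ 2 + y ^ 2 = 0 -> x = 0 /\ y = 0.
Proof. intros H. pose proof (pow2_ge_0 x). pose proof (pow2_ge_0 y). split; nra. Qed.

Lemma cross_neq0_dist (V P : pt) (u : pt) : cross (vsub P V) u <> 0 -> dist P V <> 0.
Proof.
  intros Hcross Hd. apply Hcross.
  pose proof (dist_sq P V) as Hsq. rewrite Hd in Hsq.
  destruct (sum_sq_eq0 (fst P - fst V) (snd P - snd V)) as [H1 H2]; [lra |].
  unfold cross, vsub; cbn [fst snd]. rewrite H1, H2. ring.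
Qed.

(* Signed distance from X to the line V P, positive on the left of V -> P
   (junk value 0 when P = V). *)
Definition sdist (X V P : pt) : R := cross (vsub P V) (vsub X V) / dist P V.

Lemma dist_to_line_sdist (X V P : pt) : dist_to_line X V P = Rabs (sdist X V P).
Proof.
  unfold dist_to_line, sdist, Rdiv.
  rewrite Rabs_mult, Rabs_inv, (Rabs_pos_eq (dist P V)); [reflexivity | apply dist_ge0].
Qed.

Lemma sdist_unit_to (X V P : pt) : sdist X V P = cross (unit_to V P) (vsub X V).
Proof. unfold sdist, dist, unit_to, cross, Rdiv; cbn [fst snd]. ring. Qed.

Lemma sdist_swap (X P Q : pt) : sdist X Q P = - sdist X P Q.
Proof.
  unfold sdist. rewrite (dist_sym Q P).
  unfold cross, vsub, Rdiv; cbn [fst snd]. ring.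
Qed.

Lemma orthogonal_multiple (p1 p2 y1 y2 : R) :
  p1 ^ 2 + p2 ^ 2 <> 0 -> p1 * y1 + p2 * y2 = 0 ->
  exists t, (y1, y2) = (t * - p2, t * p1).
Proof.
  intros Hp Horth. exists ((p1 * y2 - p2 * y1) / (p1 ^ 2 + p2 ^ 2)).
  assert (H1 : p1 * (p1 * y1 + p2 * y2) = 0) by (rewrite Horth; ring).
  assert (H2 : p2 * (p1 * y1 + p2 * y2) = 0) by (rewrite Horth; ring).
  f_equal; field_simplify_eq; auto; lra.
Qed.

Lemma external_bisector_iff (u v Y : pt) :
  fst u ^ 2 + snd u ^ 2 = fst v ^ 2 + snd v ^ 2 -> cross u v <> 0 ->
  (exists t, Y = (t * - (snd u + snd v), t * (fst u + fst v))) <-> cross u Y = cross v Y.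
Proof.
  destruct u as [u1 u2], v as [v1 v2], Y as [y1 y2]; unfold cross; cbn [fst snd].
  intros Hlen Hcross. split.
  - intros [t Ht]. injection Ht as -> ->. apply Rminus_diag_uniq.
    transitivity (t * ((u1 ^ 2 + u2 ^ 2) - (v1 ^ 2 + v2 ^ 2))); [ring | rewrite Hlen; ring].
  - intros Heq.
    assert (Hq : (u1 - v1) ^ 2 + (u2 - v2) ^ 2 <> 0).
    { intro Z. apply Hcross. apply sum_sq_eq0 in Z as [Z1 Z2].
      replace u1 with v1 by lra. replace u2 with v2 by lra. ring. }
    assert (Hp : (u1 + v1) ^ 2 + (u2 + v2) ^ 2 <> 0).
    { intro Z. apply Hcross. apply sum_sq_eq0 in Z as [Z1 Z2].
      replace u1 with (- v1) by lra. replace u2 with (- v2) by lra. ring. }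
    (* u + v is orthogonal to u - v, which is parallel to Y. *)
    assert (Horth : (u1 + v1) * y1 + (u2 + v2) * y2 = 0).
    { apply (Rmult_eq_reg_r ((u1 - v1) ^ 2 + (u2 - v2) ^ 2)); auto.
      transitivity ((u1 ^ 2 + u2 ^ 2 - (v1 ^ 2 + v2 ^ 2)) * ((u1 - v1) * y1 + (u2 - v2) * y2)
                    + ((u1 - v1) * (u2 + v2) - (u2 - v2) * (u1 + v1))
                      * ((u1 * y2 - u2 * y1) - (v1 * y2 - v2 * y1))); [ring|].
      rewrite Hlen, Heq. ring. }
    exact (orthogonal_multiple _ _ _ _ Hp Horth).
Qed.

Lemma unit_to_sq (V P : pt) :
  dist P V <> 0 -> fst (unit_to V P) ^ 2 + snd (unit_to V P) ^ 2 = 1.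
Proof.
  intros HP. pose proof (dist_sq P V) as Hsq.
  unfold unit_to; cbn [fst snd]. change (norm (vsub P V)) with (dist P V).
  unfold vsub; cbn [fst snd].
  transitivity (((fst P - fst V) ^ 2 + (snd P - snd V) ^ 2) / dist P V ^ 2); [field; auto |].
  rewrite <- Hsq. field. auto.
Qed.

Lemma cross_unit_to (V P Q : pt) :
  dist P V <> 0 -> dist Q V <> 0 ->
  cross (unit_to V P) (unit_to V Q) = cross (vsub P V) (vsub Q V) / (dist P V * dist Q V).
Proof.
  intros HP HQ. unfold unit_to, cross; cbn [fst snd].
  change (norm (vsub P V)) with (dist P V). change (norm (vsub Q V)) with (dist Q V).
  field. auto.
Qed.

Lemma on_fold_line_iff (V P Q X : pt) :
  cross (vsub P V) (vsub Q V) <> 0 ->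
  (exists t, X = (fst V + t * fst (fold_dir V P Q), snd V + t * snd (fold_dir V P Q)))
  <-> sdist X V P = sdist X V Q.
Proof.
  intros Hangle.
  assert (HP : dist P V <> 0) by exact (cross_neq0_dist _ _ _ Hangle).
  assert (HQ : dist Q V <> 0).
  { apply (cross_neq0_dist _ _ (vsub P V)). rewrite cross_antisym. lra. }
  assert (Hlen : fst (unit_to V P) ^ 2 + snd (unit_to V P) ^ 2
                 = fst (unit_to V Q) ^ 2 + snd (unit_to V Q) ^ 2)
    by (rewrite !unit_to_sq; auto).
  assert (Hunit : cross (unit_to V P) (unit_to V Q) <> 0).
  { rewrite cross_unit_to by auto. unfold Rdiv.
    apply Rmult_integral_contrapositive_currified; [auto |].
    apply Rinv_neq_0_compat, Rmult_integral_contrapositive_currified; auto. }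
  rewrite !sdist_unit_to, <- (external_bisector_iff _ _ (vsub X V) Hlen Hunit).
  change (fst (fold_dir V P Q)) with (- (snd (unit_to V P) + snd (unit_to V Q))).
  change (snd (fold_dir V P Q)) with (fst (unit_to V P) + fst (unit_to V Q)).
  unfold vsub at 1. split; intros [t Ht]; exists t.
  - rewrite Ht; cbn [fst snd]. f_equal; ring.
  - pose proof (f_equal fst Ht) as H1. pose proof (f_equal snd Ht) as H2.
    cbn [fst snd] in H1, H2. destruct X as [x1 x2]; cbn [fst snd] in *. f_equal; lra.
Qed.

Lemma fold_segmentE (w : R) (V P Q X : pt) :
  cross (vsub P V) (vsub Q V) <> 0 ->
  fold_segment w V P Q X <-> sdist X V P = sdist X V Q /\ Rabs (sdist X V P) <= w / 2.
Proof.
  intros Hangle. unfold fold_segment.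
  rewrite (on_fold_line_iff V P Q X Hangle), !dist_to_line_sdist.
  split; intros [Heq Hle]; split; auto.
  - apply Hle.
  - rewrite <- Heq. auto.
Qed.

Lemma dist_mul_sdist (X V P : pt) :
  dist P V <> 0 -> dist P V * sdist X V P = cross (vsub P V) (vsub X V).
Proof. intros HP. unfold sdist. field. auto. Qed.

Lemma nondegenerate_rot (A B C : pt) : nondegenerate A B C -> nondegenerate B C A.
Proof.
  unfold nondegenerate. intros HK Z. apply HK. rewrite <- Z.
  unfold cross, vsub; cbn [fst snd]. ring.
Qed.

Lemma nondegenerate_dist_neq0 (A B C : pt) : nondegenerate A B C -> dist B A <> 0.
Proof. apply cross_neq0_dist. Qed.

Lemma nondegenerate_fold_angle (A B C : pt) :
  nondegenerate A B C -> cross (vsub C A) (vsub B A) <> 0.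
Proof. unfold nondegenerate. rewrite cross_antisym. lra. Qed.

Lemma fold_lines_meet (A B C X : pt) :
  nondegenerate A B C -> sdist X A C = sdist X A B -> sdist X B A = sdist X B C ->
  sdist X A B * (dist B C + dist C A - dist A B) = - cross (vsub B A) (vsub C A).
Proof.
  intros HK HA HB.
  pose proof (nondegenerate_dist_neq0 _ _ _ HK) as Hc.
  pose proof (nondegenerate_dist_neq0 _ _ _ (nondegenerate_rot _ _ _ HK)) as Ha.
  pose proof (nondegenerate_dist_neq0 _ _ _
                (nondegenerate_rot _ _ _ (nondegenerate_rot _ _ _ HK))) as Hb.
  (* The triangle A B C is cut into X A B, X B C and X C A. *)
  assert (Harea : cross (vsub B A) (vsub X A) + cross (vsub C B) (vsub X B)
                  + cross (vsub A C) (vsub X C) = cross (vsub B A) (vsub C A)).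
  { unfold cross, vsub; cbn [fst snd]. ring. }
  rewrite <- (dist_mul_sdist X A B), <- (dist_mul_sdist X B C), <- (dist_mul_sdist X C A)
    in Harea by auto.
  rewrite <- HB, (sdist_swap X A C), HA, (sdist_swap X A B) in Harea.
  rewrite (dist_sym A B), (dist_sym B C), (dist_sym C A). lra.
Qed.

Lemma heron (A B C : pt) :
  let a := dist B C in let b := dist C A in let c := dist A B in
  4 * cross (vsub B A) (vsub C A) ^ 2 = (a + b + c) * (a + b - c) * (a - b + c) * (- a + b + c).
Proof.
  intros a b c.
  transitivity (2 * (a ^ 2 * b ^ 2 + b ^ 2 * c ^ 2 + c ^ 2 * a ^ 2)
                - (a ^ 2) ^ 2 - (b ^ 2) ^ 2 - (c ^ 2) ^ 2); [| ring].
  unfold a, b, c. rewrite !dist_sq.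
  unfold cross, vsub; cbn [fst snd]. ring.
Qed.

Lemma fold_lines_meet_sq (A B C X : pt) :
  nondegenerate A B C -> sdist X A C = sdist X A B -> sdist X B A = sdist X B C ->
  let a := dist B C in let b := dist C A in let c := dist A B in
  4 * sdist X A B ^ 2 * (a + b - c) = (a + b + c) * (a - b + c) * (- a + b + c).
Proof.
  intros HK HA HB a b c.
  pose proof (fold_lines_meet A B C X HK HA HB) as Hmeet. pose proof (heron A B C) as Hheron.
  fold a b c in Hmeet, Hheron.
  assert (HD : a + b - c <> 0).
  { intro Z. rewrite Z, Rmult_0_r in Hmeet. apply HK. lra. }
  apply (Rmult_eq_reg_r (a + b - c)); auto.
  transitivity (4 * (sdist X A B * (a + b - c)) ^ 2); [ring |].
  rewrite Hmeet.
  transitivity (4 * cross (vsub B A) (vsub C A) ^ 2); [ring |].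
  rewrite Hheron. ring.
Qed.

Definition excenter (A B C : pt) : pt :=
  let a := dist B C in let b := dist C A in let c := dist A B in
  ((a * fst A + b * fst B - c * fst C) / (a + b - c),
   (a * snd A + b * snd B - c * snd C) / (a + b - c)).

Lemma excenter_on_fold_lines (A B C : pt) :
  nondegenerate A B C -> dist B C + dist C A - dist A B <> 0 ->
  sdist (excenter A B C) A C = sdist (excenter A B C) A B
  /\ sdist (excenter A B C) B A = sdist (excenter A B C) B C.
Proof.
  intros HK HD.
  pose proof (nondegenerate_dist_neq0 _ _ _ HK) as Hc.
  pose proof (nondegenerate_dist_neq0 _ _ _ (nondegenerate_rot _ _ _ HK)) as Ha.
  pose proof (nondegenerate_dist_neq0 _ _ _
                (nondegenerate_rot _ _ _ (nondegenerate_rot _ _ _ HK))) as Hb.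
  rewrite (dist_sym B A) in Hc. rewrite (dist_sym C B) in Ha. rewrite (dist_sym A C) in Hb.
  unfold sdist, excenter. rewrite (dist_sym B A), (dist_sym C B).
  set (a := dist B C) in *. set (b := dist C A) in *. set (c := dist A B) in *.
  unfold cross, vsub; cbn [fst snd]. split; field; auto.
Qed.

Lemma exradius_sq_le (a b c r : R) :
  0 < c -> c <= a -> c <= b ->
  4 * r ^ 2 * (a + b - c) = (a + b + c) * (a - b + c) * (- a + b + c) ->
  12 * r ^ 2 <= (a + b + c) ^ 2.
Proof.
  intros Hc Hca Hcb Hr.
  set (x := - a + b + c). set (y := a - b + c). set (z := a + b - c).
  assert (Hz : 0 < z) by (unfold z; lra).
  (* c is the shortest side, so z dominates x and y, while x + y = 2 c >= 0. *)
  assert (Hxy : 3 * x * y <= z * (x + y + z)).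
  { assert (x <= z) by (unfold x, z; lra). assert (y <= z) by (unfold y, z; lra).
    assert (0 <= x + y) by (unfold x, y; lra).
    destruct (Rle_or_lt 0 x), (Rle_or_lt 0 y); nra. }
  replace (a + b + c) with (x + y + z) in * by (unfold x, y, z; ring).
  fold x y z in Hr.
  assert (Hs : 0 <= x + y + z) by (unfold x, y, z; lra).
  apply (Rmult_le_reg_r z); auto.
  transitivity (3 * (x + y + z) * x * y); [nra |].
  transitivity ((x + y + z) * (z * (x + y + z))); [nra | right; ring].
Qed.

Lemma two_abs_sqrt3 (r : R) : 2 * Rabs r = sqrt (12 * r ^ 2) / sqrt 3.
Proof.
  assert (H3 : 0 < sqrt 3) by (apply sqrt_lt_R0; lra).
  replace (12 * r ^ 2) with (3 * (2 * Rabs r) ^ 2) by (rewrite <- (pow2_abs r); ring).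
  rewrite sqrt_mult_alt, sqrt_pow2 by (pose proof (Rabs_pos r); lra).
  field. lra.
Qed.

Lemma two_abs_le_div_sqrt3 (r L : R) :
  0 <= L -> 12 * r ^ 2 <= L ^ 2 -> 2 * Rabs r <= L / sqrt 3.
Proof.
  intros HL Hr. rewrite two_abs_sqrt3, <- (sqrt_pow2 L HL).
  apply Rmult_le_compat_r; [left; apply Rinv_0_lt_compat, sqrt_lt_R0; lra |].
  apply sqrt_le_1_alt. exact Hr.
Qed.

Lemma Len_rot (A B C : pt) : Len B C A = Len A B C.
Proof. unfold Len. ring. Qed.

Lemma equilateral_rot (A B C : pt) : equilateral A B C -> equilateral B C A.
Proof. unfold equilateral. lra. Qed.

Lemma shortest_of_three (x y z : R) :
  (x <= y /\ x <= z) \/ (y <= z /\ y <= x) \/ (z <= x /\ z <= y).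
Proof. destruct (Rle_or_lt x y), (Rle_or_lt y z), (Rle_or_lt x z); lra. Qed.

Lemma fold_segments_meet (A B C : pt) (w : R) :
  nondegenerate A B C -> dist A B <= dist B C -> dist A B <= dist C A ->
  Len A B C / sqrt 3 <= w ->
  exists X, fold_segment w A C B X /\ fold_segment w B A C X.
Proof.
  intros HK Hca Hcb Hw.
  assert (Hc : 0 < dist A B).
  { pose proof (nondegenerate_dist_neq0 _ _ _ HK) as Hc. rewrite dist_sym in Hc.
    pose proof (dist_ge0 A B). lra. }
  assert (HD : dist B C + dist C A - dist A B <> 0) by lra.
  destruct (excenter_on_fold_lines A B C HK HD) as [HA HB].
  pose proof (fold_lines_meet_sq A B C _ HK HA HB) as Hsq; cbv zeta in Hsq.
  set (E := excenter A B C) in *.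
  assert (Hrad : 2 * Rabs (sdist E A B) <= Len A B C / sqrt 3).
  { apply two_abs_le_div_sqrt3; unfold Len.
    { pose proof (dist_ge0 B C). pose proof (dist_ge0 C A). lra. }
    replace (dist A B + dist B C + dist C A) with (dist B C + dist C A + dist A B) by ring.
    exact (exradius_sq_le _ _ _ _ Hc Hca Hcb Hsq). }
  exists E.
  rewrite (fold_segmentE w A C B E (nondegenerate_fold_angle _ _ _ HK)),
          (fold_segmentE w B A C E (nondegenerate_fold_angle _ _ _ (nondegenerate_rot _ _ _ HK))),
          <- HB, HA, (sdist_swap E A B), Rabs_Ropp.
  repeat split; lra.
Qed.

Lemma equilateral_fold_segments_disjoint (A B C : pt) (w : R) (X : pt) :
  nondegenerate A B C -> equilateral A B C -> w < Len A B C / sqrt 3 ->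
  ~ (fold_segment w A C B X /\ fold_segment w B A C X).
Proof.
  intros HK [Hab Hbc] Hw [HXA HXB].
  rewrite (fold_segmentE w A C B X (nondegenerate_fold_angle _ _ _ HK)) in HXA.
  rewrite (fold_segmentE w B A C X
             (nondegenerate_fold_angle _ _ _ (nondegenerate_rot _ _ _ HK))) in HXB.
  destruct HXA as [HA Hwidth], HXB as [HB _].
  pose proof (fold_lines_meet_sq A B C X HK HA HB) as Hsq; cbv zeta in Hsq.
  assert (Hc : dist A B <> 0) by (rewrite dist_sym; exact (nondegenerate_dist_neq0 _ _ _ HK)).
  unfold Len in Hw. rewrite <- Hbc, <- Hab in Hsq, Hw.
  set (c := dist A B) in *.
  assert (Hexact : 2 * Rabs (sdist X A B) = (c + c + c) / sqrt 3).
  { rewrite two_abs_sqrt3, <- (sqrt_pow2 (c + c + c)).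
    - f_equal. f_equal. apply (Rmult_eq_reg_r c); auto. lra.
    - pose proof (dist_ge0 A B) as Hc0. fold c in Hc0. lra. }
  rewrite HA in Hwidth. lra.
Qed.

Theorem theorem5p5 :
  (forall (A B C : pt) (w : R) (F : folding),
      nondegenerate A B C -> Len A B C = 1 ->
      folded_ribbon_ok A B C w ->
      (ribbon_Lk F = 1%Z \/ ribbon_Lk F = (-1)%Z) ->
      w <= 1 / sqrt 3)
  /\
  (forall (A B C : pt),
      nondegenerate A B C -> equilateral A B C -> Len A B C = 1 ->
      forall w : R, 0 < w < 1 / sqrt 3 -> folded_ribbon_ok A B C w).
Proof.
  split.
  - (* The folding information does not enter: disjointness of the fold lines alone bounds w. *)
    intros A B C w F HK HL [_ [HAB [HBC HCA]]] _.
    destruct (Rle_or_lt w (1 / sqrt 3)) as [Hle | Hgt]; [exact Hle | exfalso].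
    rewrite <- HL in Hgt. apply Rlt_le in Hgt.
    pose proof (nondegenerate_rot _ _ _ HK) as HK'.
    destruct (shortest_of_three (dist A B) (dist B C) (dist C A))
      as [[H1 H2] | [[H1 H2] | [H1 H2]]].
    + destruct (fold_segments_meet A B C w HK H1 H2 Hgt) as [X HX]. exact (HAB X HX).
    + rewrite <- (Len_rot A B C) in Hgt.
      destruct (fold_segments_meet B C A w HK' H1 H2 Hgt) as [X HX]. exact (HBC X HX).
    + rewrite <- (Len_rot A B C), <- (Len_rot B C A) in Hgt.
      destruct (fold_segments_meet C A B w (nondegenerate_rot _ _ _ HK') H1 H2 Hgt) as [X HX].
      exact (HCA X HX).
  - intros A B C HK HE HL w [Hw0 Hw]. rewrite <- HL in Hw.
    pose proof (nondegenerate_rot _ _ _ HK) as HK'. pose proof (equilateral_rot _ _ _ HE) as HE'.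
    split; [exact Hw0 |]. repeat split; intros X.
    + exact (equilateral_fold_segments_disjoint A B C w X HK HE Hw).
    + rewrite <- (Len_rot A B C) in Hw.
      exact (equilateral_fold_segments_disjoint B C A w X HK' HE' Hw).
    + rewrite <- (Len_rot A B C), <- (Len_rot B C A) in Hw.
      exact (equilateral_fold_segments_disjoint C A B w X
               (nondegenerate_rot _ _ _ HK') (equilateral_rot _ _ _ HE') Hw).
Qed.
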